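(* Let $p$ be an odd prime, $a,m\in\mathbb Z_p$ with $m\not\equiv0\pmod p$ and $a\not\equiv0,-1\pmod p$, and put $A_k=\binom ak\binom{-1-a}k\binom{2k}k$. Then $$\sum_{k=0}^{p-1}\frac{A_k}{m^k(2k-1)}\equiv\Big(\frac8m-2\Big)\sum_{k=0}^{p-1}\frac{kA_k}{m^k}-\sum_{k=0}^{p-1}\frac{A_k}{m^k}-\frac{8a(a+1)}m\sum_{k=0}^{p-2}\frac{A_k}{m^k(k+1)}\pmod{p^3}.$$
   Context: $\mathbb Z_p$ denotes the set of rational numbers whose denominator is not divisible by $p$; for $u,v\in\mathbb Z_p$, $u\equiv v\pmod{p^r}$ means $(u-v)/p^r\in\mathbb Z_p$. For $a$ rational, $\binom a0=1$ and $\binom ak=\frac{a(a-1)\cdots(a-k+1)}{k!}$ for $k\ge1$. *)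

From mathcomp Require Import all_boot all_order all_algebra.
Set Implicit Arguments. Unset Strict Implicit. Unset Printing Implicit Defensive.
Import Order.TTheory GRing.Theory Num.Theory.
Local Open Scope ring_scope.

(* x lies in Z_p : the (reduced) denominator of x is not divisible by p. *)
Definition pint (p : nat) (x : rat) : bool := ~~ (p %| `|denq x|)%N.

Definition congr_mod (p r : nat) (u v : rat) : bool :=
  pint p ((u - v) / (p ^ r)%:R).

Definition binq (a : rat) (k : nat) : rat :=
  (\prod_(i < k) (a - i%:R)) / (k`!)%:R.

Definition Aseq (a : rat) (k : nat) : rat :=
  binq a k * binq (-1 - a) k * ('C(k.*2, k))%:R.

From HB Require Import structures.
From mathcomp Require Import all_boot all_order all_algebra.
From mathcomp Require Import ring lra zify.
Set Implicit Arguments. Unset Strict Implicit. Unset Printing Implicit Defensive.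
Import Order.TTheory GRing.Theory Num.Theory.
Local Open Scope ring_scope.

(* Let D_n be the difference of the two sides when the first three sums run
   over k <= n and the last one over k < n.  The ratio
   A_(k+1) / A_k = -2 (2k+1) (a-k) (a+k+1) / (k+1)^3 makes the sums telescope
   to D_n = -8 n A_n / m^(n+1).  For n = p-1 each of the three factors of
   A_(p-1) is divisible by p: binom(a, p-1) and binom(-1-a, p-1) because the
   residues of a and -1-a modulo p lie in [1, p-2], and binom(2p-2, p-1)
   because p divides (2p-2)! but not (p-1)!.  Hence D_(p-1) = 0 mod p^3. *)

Lemma binqS a n : binq a n.+1 = binq a n * (a - n%:R) / n.+1%:R.
Proof.
rewrite /binq big_ord_recr /= factS natrM.
have nS0 : (n.+1%:R : rat) != 0 by rewrite pnatr_eq0.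
have fn0 : (n`!%:R : rat) != 0 by rewrite pnatr_eq0 -lt0n fact_gt0.
by field; rewrite addrC natr1 nS0 fn0.
Qed.

Lemma mul_central_binS n :
  (n.+1 * 'C(n.+1.*2, n.+1) = 2 * n.*2.+1 * 'C(n.*2, n))%N.
Proof.
have diag := mul_bin_diag n.+1.*2 n; rewrite doubleS succnK in diag.
have down := mul_bin_down n.*2.+1 n; rewrite succnK in down.
rewrite doubleS -diag; move: down.
move: ('C(n.*2.+1, n)) ('C(n.*2, n)) => C' C.
nia.
Qed.

Lemma central_binS n :
  ('C(n.+1.*2, n.+1))%:R = ('C(n.*2, n))%:R * (2 * (2 * n%:R + 1)) / n.+1%:R :> rat.
Proof.
have nS0 : (n.+1%:R : rat) != 0 by rewrite pnatr_eq0.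
have double1 : (n.*2.+1)%:R = 2 * n%:R + 1 :> rat by rewrite -natr1 -muln2 natrM mulrC.
apply: (mulIf nS0); rewrite divfK // mulrC -[LHS]natrM mul_central_binS.
by rewrite !natrM double1 mulrC.
Qed.

Lemma AseqS a n : Aseq a n.+1 =
  Aseq a n * (- 2 * (2 * n%:R + 1) * (a - n%:R) * (a + n%:R + 1) / n.+1%:R ^+ 3).
Proof.
have nS0 : (n%:R + 1 : rat) != 0 by rewrite natr1 pnatr_eq0.
by rewrite /Aseq !binqS central_binS -natr1; field.
Qed.

Lemma Aseq_sums_telescope (a m : rat) n : m != 0 ->
  (\sum_(0 <= k < n.+1) Aseq a k / (m ^+ k * (2 * k%:R - 1)))
  - ((8 / m - 2) * (\sum_(0 <= k < n.+1) k%:R * Aseq a k / m ^+ k)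
     - (\sum_(0 <= k < n.+1) Aseq a k / m ^+ k)
     - 8 * a * (a + 1) / m * (\sum_(0 <= k < n) Aseq a k / (m ^+ k * (k%:R + 1))))
  = - 8 * n%:R * Aseq a n / m ^+ n.+1.
Proof.
move=> m0; elim: n => [|n IH].
  by rewrite !big_nat1 big_geq // /Aseq /binq !big_ord0 bin0 fact0 mul0r; field.
rewrite big_nat_recr //= [X in _ - (_ * X - _ - _)]big_nat_recr //=.
rewrite [X in _ - (_ - X - _)]big_nat_recr //= [X in _ - (_ - _ - _ * X)]big_nat_recr //=.
move/eqP: IH; rewrite subr_eq => /eqP ->.
have n_ge0 : (0 : rat) <= n%:R := ler0n _ n.
rewrite AseqS -[n.+1%:R]natr1 !exprS; field.
by rewrite expf_neq0 // m0 /=; apply/andP; split; apply: lt0r_neq0; lra.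
Qed.

Section PIntegers.

Variable p : nat.
Hypothesis p_pr : prime p.

Lemma pintP x :
  reflect (exists n d : int, ~~ (p %| `|d|)%N /\ x = n%:~R / d%:~R) (pint p x).
Proof.
apply: (iffP idP) => [pNd | [n [d [pNd ->]]]].
  by exists (numq x), (denq x); rewrite divq_num_den.
have d0 : d != 0 by apply: contraNneq pNd => ->; rewrite dvdn0.
rewrite /pint -(fracqE (n, d)) den_fracq /= d0 /=; apply: contra pNd => pdvd.
by apply: dvdn_trans pdvd _; apply/dvdn_div/dvdn_gcdr.
Qed.

Lemma intr_ndvd_neq0 (d : int) : ~~ (p %| `|d|)%N -> d%:~R != 0 :> rat.
Proof. by move=> pNd; rewrite intr_eq0; apply: contraNneq pNd => ->; rewrite dvdn0. Qed.

Lemma pint_subring_closed : subring_closed (pint p).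
Proof.
have pNdM (d1 d2 : int) :
    ~~ (p %| `|d1|)%N -> ~~ (p %| `|d2|)%N -> ~~ (p %| `|(d1 * d2)%R|)%N.
  by move=> pNd1 pNd2; rewrite abszM Euclid_dvdM // negb_or pNd1.
split=> [|x y|x y].
- apply/pintP; exists 1, 1; rewrite divr1 dvdn1; split=> //.
  by apply: contraTneq (prime_gt1 p_pr) => ->.
- move=> /pintP [n1 [d1 [pNd1 ->]]] /pintP [n2 [d2 [pNd2 ->]]].
  apply/pintP; exists (n1 * d2 - n2 * d1), (d1 * d2); split; first exact: pNdM.
  have d1_neq0 := intr_ndvd_neq0 pNd1; have d2_neq0 := intr_ndvd_neq0 pNd2.
  by rewrite !(rmorphB, rmorphM) /=; field; rewrite d1_neq0 d2_neq0.
- move=> /pintP [n1 [d1 [pNd1 ->]]] /pintP [n2 [d2 [pNd2 ->]]].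
  apply/pintP; exists (n1 * n2), (d1 * d2); split; first exact: pNdM.
  by rewrite !rmorphM /= mulrACA invfM.
Qed.

HB.instance Definition _ := GRing.isSubringClosed.Build rat (pint p) pint_subring_closed.

Lemma pint_natV k : ~~ (p %| k)%N -> pint p k%:R^-1.
Proof. by move=> pNk; apply/pintP; exists 1, k; rewrite div1r. Qed.

Lemma congr_mod0E r x : congr_mod p r x 0 = pint p (x / (p ^ r)%:R).
Proof. by rewrite /congr_mod subr0. Qed.

Lemma congr_modE r u v : congr_mod p r u v = congr_mod p r (u - v) 0.
Proof. by rewrite congr_mod0E. Qed.

Lemma congr_mod0M r s x y :
  congr_mod p r x 0 -> congr_mod p s y 0 -> congr_mod p (r + s) (x * y) 0.
Proof. by rewrite !congr_mod0E expnD natrM invfM mulrACA; apply: rpredM. Qed.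

Lemma congr_mod0_pintMl r c x :
  pint p c -> congr_mod p r x 0 -> congr_mod p r (c * x) 0.
Proof. by rewrite !congr_mod0E -mulrA; apply: rpredM. Qed.

Lemma prime_natr_neq0 : p%:R != 0 :> rat.
Proof. by rewrite pnatr_eq0 -lt0n prime_gt0. Qed.

Lemma dvdn_congr_mod0 k : (p %| k)%N -> congr_mod p 1 k%:R 0.
Proof.
move=> /divnK <-; rewrite congr_mod0E expn1 natrM mulfK ?prime_natr_neq0 //.
exact: rpred_nat.
Qed.

Lemma pintV x : pint p x -> ~~ congr_mod p 1 x 0 -> pint p x^-1.
Proof.
case/pintP=> n [d [pNd ->]]; rewrite congr_mod0E expn1 => xNdvd.
have pNn : ~~ (p %| `|n|)%N.
  apply: contra xNdvd => /(@dvdzP p n) [q ->]; apply/pintP; exists q, d; split=> //.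
  have := intr_ndvd_neq0 pNd; have := prime_natr_neq0.
  by rewrite rmorphM /= -pmulrn => p0 d0; field; rewrite p0 d0.
by apply/pintP; exists d, n; rewrite invf_div.
Qed.

Lemma pint_residue a : pint p a -> exists2 i, (i < p)%N & congr_mod p 1 a i%:R.
Proof.
case/pintP=> n [d [pNd ->]].
have [u [v]] := Bezoutz d p.
have -> : gcdz d p = 1.
  by rewrite /gcdz gcdnC; move: (prime_coprime `|d| p_pr); rewrite pNd => /eqP ->.
move=> uv1.
have p_gt0 : (0 < p%:Z)%R by rewrite ltz_nat prime_gt0.
(* the residue of n / d is n u mod p, u being an inverse of d mod p *)
have := divz_eq (n * u) p; have := ltz_pmod (n * u) p_gt0.
have := modz_ge0 (n * u) (lt0r_neq0 p_gt0).
move: ((n * u) %/ p)%Z ((n * u) %% p)%Z => q i i_ge0 i_lt_p nuE.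
exists `|i|%N; first by rewrite -ltz_nat gez0_abs.
have key : n - i * d = (q * d + n * v) * p.
  have -> : i = n * u - q * p by rewrite nuE; ring.
  by rewrite -{1}[n]mulr1 -uv1; ring.
apply/pintP; exists (q * d + n * v), d; split=> //.
have := congr1 (intr : int -> rat) key; rewrite !(rmorphB, rmorphM, rmorphD) /= -pmulrn.
have d0 := intr_ndvd_neq0 pNd; have p0 := prime_natr_neq0.
rewrite expn1 natr_absz ger0_norm // => keyQ.
rewrite (_ : (n%:~R / d%:~R - i%:~R) / p%:R = (n%:~R - i%:~R * d%:~R) / (d%:~R * p%:R)).
  by rewrite keyQ; field; rewrite d0 p0.
by field; rewrite d0 p0.
Qed.

Lemma prime_ndvd_fact n : (n < p)%N -> ~~ (p %| n`!)%N.
Proof.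
elim: n => [|n IH] lt_np.
  by rewrite dvdn1; apply: contraTneq (prime_gt1 p_pr) => ->.
by rewrite factS Euclid_dvdM // negb_or IH ?(ltnW lt_np) // gtnNdvd.
Qed.

Lemma binq_congr_mod0 b n i :
  (i < n < p)%N -> pint p b -> congr_mod p 1 b i%:R -> congr_mod p 1 (binq b n) 0.
Proof.
case/andP=> lt_in lt_np pb; rewrite congr_mod0E /congr_mod expn1 => bi.
rewrite /binq (bigD1 (Ordinal lt_in)) //= mulrAC (mulrAC (b - i%:R)).
apply: rpredM; last exact: pint_natV (prime_ndvd_fact lt_np).
apply: rpredM => //; apply: rpred_prod => j _; apply: rpredB => //; exact: rpred_nat.
Qed.

Lemma prime_dvd_central_bin n : (n < p <= n.*2)%N -> (p %| 'C(n.*2, n))%N.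
Proof.
case/andP=> lt_np le_p2n.
have : (p %| n.*2`!)%N by apply: dvdn_fact; rewrite prime_gt0.
rewrite -addnn -(bin_fact (leq_addr n n)) addKn Euclid_dvdM // => /orP [// |].
by rewrite Euclid_dvdM // orbb (negPf (prime_ndvd_fact lt_np)).
Qed.

Lemma Aseq_pred_congr_mod0 a : pint p a ->
  ~~ congr_mod p 1 a 0 -> ~~ congr_mod p 1 a (-1) -> congr_mod p 3 (Aseq a p.-1) 0.
Proof.
move=> pa a_nz a_nm1.
have [i lt_ip ai] := pint_residue pa.
have pE : p%:R = p.-1%:R + 1 :> rat by rewrite natr1 prednK ?prime_gt0.
have p0 := prime_natr_neq0.
have i_neq0 : i != 0%N by apply: contra a_nz => /eqP i0; move: ai; rewrite i0.
have i_neq_pred : i != p.-1.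
  apply: contra a_nm1 => /eqP ip; move: ai; rewrite /congr_mod ip expn1 => ai.
  rewrite (_ : (a - -1) / p%:R = (a - p.-1%:R) / p%:R + 1).
    by apply: rpredD => //; apply: rpred1.
  by rewrite pE; field; rewrite -pE.
have lt_i_pred : (i < p.-1)%N by lia.
have lt_pred_p : (p.-1 < p)%N by rewrite prednK ?prime_gt0.
rewrite -[3%N]/(1 + 1 + 1)%N; apply: congr_mod0M; [apply: congr_mod0M|].
- by apply: (@binq_congr_mod0 _ _ i) => //; lia.
- apply: (@binq_congr_mod0 _ _ (p.-1 - i)); first by lia.
    by apply: rpredB => //; rewrite rpredN rpred1.
  move: ai; rewrite /congr_mod expn1 natrB ?(ltnW lt_i_pred) // => ai.
  rewrite (_ : (-1 - a - (p.-1%:R - i%:R)) / p%:R = - ((a - i%:R) / p%:R) - 1).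
    by apply: rpredB; rewrite ?rpredN ?rpred1.
  by rewrite pE; field; rewrite -pE.
- by apply/dvdn_congr_mod0/prime_dvd_central_bin; lia.
Qed.

End PIntegers.

Theorem theorem5p1 (p : nat) (a m : rat) :
  prime p -> odd p ->
  pint p a -> pint p m ->
  ~~ congr_mod p 1 m 0 -> ~~ congr_mod p 1 a 0 -> ~~ congr_mod p 1 a (-1) ->
  congr_mod p 3
    (\sum_(0 <= k < p) Aseq a k / (m ^+ k * (2 * k%:R - 1)))
    ((8 / m - 2) * (\sum_(0 <= k < p) k%:R * Aseq a k / m ^+ k)
     - (\sum_(0 <= k < p) Aseq a k / m ^+ k)
     - 8 * a * (a + 1) / m * (\sum_(0 <= k < p.-1) Aseq a k / (m ^+ k * (k%:R + 1)))).
Proof.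
move=> p_pr _ pa pm m_nz a_nz a_nm1.
have m0 : m != 0.
  by apply: contraNneq m_nz => m0; rewrite m0 congr_mod0E mul0r; apply: rpred0.
rewrite congr_modE.
have := Aseq_sums_telescope a p.-1 m0; rewrite prednK ?prime_gt0 // => ->.
rewrite mulrAC.
apply: (congr_mod0_pintMl p_pr); last exact: Aseq_pred_congr_mod0.
apply: rpredM; first by rewrite rpredM ?rpredN ?rpred_nat.
by rewrite -exprVn rpredX //; apply: pintV.
Qed.
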